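(* Let $k\ge 1$ and let $D_k\in\{0,1\}^{k\times k}$ be the matrix with $\mathrm{supp}(D_k)=\{(i,i):i\in[k]\}$. A matrix $M\in\{0,1\}^{m\times n}$ avoids $D_k$ as an interval minor if and only if $M$ contains $k-1$ increasing walks $W_1,\dots,W_{k-1}$ from $(m,1)$ to $(1,n)$ such that $\mathrm{supp}(M)\subseteq W_1\cup\dots\cup W_{k-1}$.
   Context: Rows are numbered top to bottom, columns left to right; $(i,j)$ is the entry in row $i$, column $j$; $\mathrm{supp}(M)$ is the set of 1-entries; $[k]=\{1,\dots,k\}$, $(a,b]=\{a+1,\dots,b\}$. A pattern $P\in\{0,1\}^{k\times\ell}$ is an interval minor of $M\in\{0,1\}^{m\times n}$ if there are integers $0=r_0<\dots<r_k=m$ and $0=c_0<\dots<c_\ell=n$ such that for each 1-entry $(i,j)$ of $P$ the submatrix of $M$ on rows $(r_{i-1},r_i]$ and columns $(c_{j-1},c_j]$ contains a 1-entry; otherwise $M$ avoids $P$. An increasing walk from $e$ to $e'$ in $M$ is a set of entries $\{e_0,\dots,e_t\}$, $e_i=(r_i,c_i)$, with $e_0=e$, $e_t=e'$, and for each $i\in[t]$ either $r_i=r_{i-1}$ and $c_i=c_{i-1}+1$, or $r_i=r_{i-1}-1$ and $c_i=c_{i-1}$. *)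

From mathcomp Require Import all_boot all_algebra.
Set Implicit Arguments. Unset Strict Implicit. Unset Printing Implicit Defensive.

(* 0/1 matrices are 'M[bool]_(m,n).  Rocq indices are 0-based: the entry
   (i,j) of the paper (1-based) is  M (i-1) (j-1). *)

Definition supp (m n : nat) (M : 'M[bool]_(m, n)) (e : nat * nat) : Prop :=
  exists (a : 'I_m) (b : 'I_n), e = (a.+1, b.+1) /\ M a b.

(* The paper's block of rows (r_{i-1}, r_i] (1-based) for
   pattern row i = i0+1 is, in 0-based indexing, r_{i0} <= a < r_{i0+1}. *)
Definition interval_minor (k l m n : nat) (P : 'M[bool]_(k, l))
    (M : 'M[bool]_(m, n)) : Prop :=
  exists r c : nat -> nat,
    [/\ r 0 = 0, r k = m & (forall i, i < k -> r i < r i.+1)] /\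
    [/\ c 0 = 0, c l = n & (forall j, j < l -> c j < c j.+1)] /\
        forall (i : 'I_k) (j : 'I_l), P i j ->
          exists (a : 'I_m) (b : 'I_n),
            [/\ r i <= a < r i.+1, c j <= b < c j.+1 & M a b].

Definition avoids (k l m n : nat) (P : 'M[bool]_(k, l)) (M : 'M[bool]_(m, n))
  : Prop := ~ interval_minor P M.

Definition Dmat (k : nat) : 'M[bool]_(k, k) := \matrix_(i < k, j < k) (i == j).

Definition walk_step (p q : nat * nat) : bool :=
  ((q.1 == p.1) && (q.2 == p.2.+1)) || ((q.1.+1 == p.1) && (q.2 == p.2)).

Definition increasing_walk (e e' : nat * nat) (s : seq (nat * nat)) : bool :=
  path walk_step e s && (last e s == e').

Definition walk_set (e : nat * nat) (s : seq (nat * nat)) (x : nat * nat)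
  : Prop := x \in e :: s.

From mathcomp Require Import all_boot all_algebra.
From mathcomp Require Import zify.
Set Implicit Arguments. Unset Strict Implicit.

(* An increasing walk only moves up or right, so no two of its entries lie
   strictly down-right of one another; a copy of D_k is exactly a chain of k
   1-entries going strictly down-right.  Hence k - 1 walks cannot cover such a
   chain (pigeonhole).  Conversely, give every 1-entry as level the length of
   the longest chain strictly up-left of it.  Avoiding D_k keeps the levels
   below k - 1, and the entries of one level form an antichain, which is covered
   by the staircase walk following the rightmost entries of that level row by
   row (Mirsky's theorem for the product order). *)

Lemma walk_northeast (e x : nat * nat) s :
  path walk_step e s -> x \in e :: s -> x.1 <= e.1 /\ e.2 <= x.2.
Proof.
elim: s e => [|y s IH] e /=; first by move=> _; rewrite inE => /eqP ->.
move=> /andP [ey ys]; rewrite inE => /orP [/eqP -> //|xs].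
have [] := IH y ys xs; move: ey; rewrite /walk_step.
by case/orP=> /andP [/eqP e1 /eqP e2]; lia.
Qed.

Lemma walk_antichain (e x y : nat * nat) s : path walk_step e s ->
  x \in e :: s -> y \in e :: s -> x.1 < y.1 -> y.2 <= x.2.
Proof.
elim: s e => [|z s IH] e es.
  by rewrite !inE => /eqP -> /eqP ->; rewrite ltnn.
have zs : path walk_step z s by case/andP: es.
have zsNE (w : nat * nat) : w \in z :: s -> w.1 <= e.1 /\ e.2 <= w.2.
  by move=> ws; apply: walk_northeast es _; rewrite in_cons ws orbT.
rewrite !(in_cons e) => /predU1P [-> | xs] /predU1P [-> | ys].
- by rewrite ltnn.
- by have [h _] := zsNE y ys; lia.
- by have [_ h] := zsNE x xs.
- exact: IH zs xs ys.
Qed.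

Lemma separating_cuts k m (p : nat -> nat) : 0 < k ->
  (forall s, s.+1 < k -> p s < p s.+1) -> (forall s, s < k -> p s < m) ->
  exists r : nat -> nat,
    [/\ r 0 = 0, r k = m & forall i, i < k -> r i <= p i < r i.+1].
Proof.
move=> k_gt0 p_incr p_lt.
exists (fun i => if i == 0 then 0 else if i < k then p i else m).
split=> [//||i ik]; first by rewrite ltnn; case: eqP k_gt0 => // ->.
rewrite /= ik; apply/andP; split; first by case: eqP.
by case: (ltnP i.+1 k) => h; [exact: p_incr | exact: p_lt].
Qed.

Lemma increasing_cuts_le k (r : nat -> nat) :
  (forall i, i < k -> r i < r i.+1) -> forall i j, i <= j <= k -> r i <= r j.
Proof.
move=> r_incr i j /andP [ij jk].
apply: (homo_leq_in (D := [pred i | i <= k]) (f := r) leqnn leq_trans) => //=.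
- by move=> a b ak bk c /andP [_ /ltnW /leq_trans]; apply.
- by move=> a _ ak; apply/ltnW/r_incr.
- exact: leq_trans jk.
Qed.

Lemma interval_minor_Dmat_chain k m n (M : 'M[bool]_(m, n)) :
  interval_minor (Dmat k) M ->
  exists f : 'I_k -> 'I_m * 'I_n, (forall i, M (f i).1 (f i).2) /\
    forall i j : 'I_k, i < j -> (f i).1 < (f j).1 /\ (f i).2 < (f j).2.
Proof.
case=> r [c [[_ _ r_incr] [[_ _ c_incr] blocks]]].
have /fin_all_exists [f fP] : forall i : 'I_k, exists p : 'I_m * 'I_n,
    [/\ r i <= p.1 < r i.+1, c i <= p.2 < c i.+1 & M p.1 p.2].
  move=> i; move: (blocks i i); rewrite mxE eqxx => /(_ isT) [a [b]].
  by exists (a, b).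
exists f; split=> [i | i j ij]; first by case: (fP i).
have [/andP [_ ri] /andP [_ ci] _] := fP i.
have [/andP [rj _] /andP [cj _] _] := fP j.
have := increasing_cuts_le r_incr (i := i.+1) (j := j).
have := increasing_cuts_le c_incr (i := i.+1) (j := j).
have := ltn_ord j; lia.
Qed.

Lemma ord_pigeonhole k l (g : 'I_k -> 'I_l) : l < k ->
  exists i j : 'I_k, i < j /\ g i = g j.
Proof.
move=> lk; have /injectivePn [i [j ij gij]] : ~~ injectiveb g.
  by apply/negP => /injectiveP /leq_card; rewrite !card_ord leqNgt lk.
case: (ltngtP i j) => [lt | lt | /val_inj eq]; first by exists i, j.
  by exists j, i.
by rewrite eq eqxx in ij.
Qed.

Lemma walk_cover_avoids k m n (M : 'M[bool]_(m, n))
    (W : 'I_k.-1 -> seq (nat * nat)) :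
  0 < k -> (forall t, increasing_walk (m, 1) (1, n) (W t)) ->
  (forall e, supp M e -> exists t, walk_set (m, 1) (W t) e) ->
  avoids (Dmat k) M.
Proof.
move=> k_gt0 walks cover /interval_minor_Dmat_chain [f [fM f_incr]].
have /fin_all_exists [g gP] : forall i : 'I_k, exists t,
    walk_set (m, 1) (W t) (((f i).1 : nat).+1, ((f i).2 : nat).+1).
  by move=> i; apply: cover; exists (f i).1, (f i).2; split; last exact: fM.
have /(ord_pigeonhole g) [i [j [ij gij]]] : k.-1 < k by rewrite ltn_predL.
have /andP [walk_gi _] := walks (g i).
have fj_on_gi := gP j; rewrite -gij in fj_on_gi.
have [lt1 lt2] := f_incr i j ij.
by have := walk_antichain walk_gi (gP i) fj_on_gi; rewrite /= !ltnS; lia.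
Qed.

Lemma row_walk i j l :
  increasing_walk (i, j) (i, j + l) [seq (i, x) | x <- iota j.+1 l].
Proof.
elim: l j => [|l IH] j; first by rewrite addn0 /increasing_walk /= eqxx.
have /andP [hp /eqP hl] := IH j.+1.
by rewrite /increasing_walk /= hp hl addSnnS /walk_step /= !eqxx.
Qed.

Lemma increasing_walk_cat e x y s1 s2 :
  increasing_walk e x s1 -> increasing_walk x y s2 ->
  increasing_walk e y (s1 ++ s2).
Proof.
rewrite /increasing_walk cat_path last_cat.
by move=> /andP [-> /eqP ->] /andP [-> ->].
Qed.

Section Staircase.

Variable c : nat -> nat.
Hypothesis c_noninc : forall i, c i.+1 <= c i.

Definition staircase_row (i : nat) : seq (nat * nat) :=
  [seq (i, x) | x <- iota (c i.+1) (c i - c i.+1).+1].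

Fixpoint staircase (i : nat) : seq (nat * nat) :=
  if i is i'.+1 then staircase_row i ++ staircase i' else [::].

Lemma mem_staircase_row i (x : nat * nat) :
  (x \in staircase_row i) = (x.1 == i) && (c i.+1 <= x.2 <= c i).
Proof.
apply/mapP/andP => [[y] | [/eqP <- hx]].
  by rewrite mem_iota => hy -> /=; split=> //; have := c_noninc i; lia.
by exists x.2; [rewrite mem_iota; have := c_noninc x.1; lia | case: x {hx}].
Qed.

Lemma mem_staircase i (x : nat * nat) :
  (x \in staircase i) = (0 < x.1 <= i) && (c x.1.+1 <= x.2 <= c x.1).
Proof.
elim: i => [|i IH]; first by rewrite in_nil ltnNge andNb.
rewrite mem_cat mem_staircase_row IH.
case: (ltngtP x.1 i.+1) => [hx | hx | ->].
- by rewrite ltnS in hx; rewrite hx.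
- by have -> : x.1 <= i = false by lia.
- by rewrite ltnn andbF orbF.
Qed.

Lemma staircase_walk i : 0 < i ->
  staircase i = (i, c i.+1) :: behead (staircase i) /\
  increasing_walk (i, c i.+1) (1, c 1) (behead (staircase i)).
Proof.
have row_walk_i j : increasing_walk (j, c j.+1) (j, c j)
    [seq (j, x) | x <- iota (c j.+1).+1 (c j - c j.+1)].
  by have := row_walk j (c j.+1) (c j - c j.+1); rewrite subnKC.
case: i => // i _; elim: i => [|i [-> walk_i]] /=; first by rewrite cats0.
split=> //; apply: increasing_walk_cat (row_walk_i _) _.
apply: (@increasing_walk_cat _ (i.+1, c i.+2) _ [:: _]) walk_i.
by rewrite /increasing_walk /= /walk_step /= !eqxx orbT.
Qed.

End Staircase.

Section LongestChain.

Variables (m n : nat) (M : 'M[bool]_(m, n)).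

Definition entry (a b : nat) : bool :=
  if insub a is Some i then if insub b is Some j then M i j else false
  else false.

Lemma entryE (i : 'I_m) (j : 'I_n) : entry i j = M i j.
Proof. by rewrite /entry !valK. Qed.

Lemma entryP a b : entry a b ->
  exists (i : 'I_m) (j : 'I_n), [/\ val i = a, val j = b & M i j].
Proof.
rewrite /entry; case: insubP => [i _ <- |//]; case: insubP => [j _ <- |//].
by exists i, j.
Qed.

(* [maxchain i j] is the length of a longest chain of 1-entries, increasing
   strictly in both coordinates, inside rows [< i] and columns [< j]. *)
Fixpoint maxchain (i j : nat) : nat :=
  if i is i'.+1 then
    maxn (maxchain i' j) (\max_(b < j | entry i' b) (maxchain i' b).+1)
  else 0.

Lemma maxchain_monor i : {homo maxchain i : j j' / j <= j'}.
Proof.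
move=> j j' jj'; elim: i => [|i IH] //=; rewrite geq_max leq_max IH /=.
apply: leq_trans (leq_maxr _ _); apply/bigmax_leqP => b Pb.
exact: (leq_bigmax_cond (widen_ord jj' b)).
Qed.

Lemma maxchain_mono i i' j j' : i <= i' -> j <= j' ->
  maxchain i j <= maxchain i' j'.
Proof.
move=> ii' /(maxchain_monor i') /(leq_trans _); apply.
elim: i' ii' => [|i' IH]; first by rewrite leqn0 => /eqP ->.
rewrite leq_eqVlt => /predU1P [-> // | /IH /leq_trans]; apply; exact: leq_maxl.
Qed.

Lemma maxchain_entry a b : entry a b -> maxchain a b < maxchain a.+1 b.+1.
Proof.
move=> ab; apply: leq_trans (leq_maxr _ _).
exact: (leq_bigmax_cond (F := fun b : 'I_b.+1 => (maxchain a b).+1) ord_max).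
Qed.

Lemma maxchain_lt a b a' b' : entry a b -> a < a' -> b < b' ->
  maxchain a b < maxchain a' b'.
Proof.
by move=> /maxchain_entry lt aa' bb'; apply: leq_trans lt (maxchain_mono _ _).
Qed.

Definition chain (t : nat) (pa pb : nat -> nat) : Prop :=
  (forall s, s < t -> entry (pa s) (pb s)) /\
  (forall s, s.+1 < t -> pa s < pa s.+1 /\ pb s < pb s.+1).

Lemma maxchain_chain i j t : t <= maxchain i j ->
  exists pa pb, chain t pa pb /\ forall s, s < t -> pa s < i /\ pb s < j.
Proof.
elim: i j t => [|i IH] j t /=; first by rewrite leqn0 => /eqP ->; exists id, id.
rewrite leq_max => /orP [/IH [pa [pb [ch inside]]] | ].
  by exists pa, pb; split=> // s /inside [ai bj]; split; lia.
case: t => [_ | t]; first by exists id, id.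
case: (pickP (fun b : 'I_j => entry i b && (t <= maxchain i b))) => [b | none].
  case/andP=> ib /IH [pa [pb [[pe pi] inside]]].
  exists (fun s => if s == t then i else pa s),
         (fun s => if s == t then b : nat else pb s).
  split; first split.
  - move=> s st; case: eqP => [_ | sNt]; [exact: ib | apply: pe; lia].
  - move=> s st; rewrite (_ : s == t = false); last by apply/eqP; lia.
    by case: eqP => [sSt | sSNt]; [apply: inside | apply: pi]; lia.
  - move=> s st; case: eqP => [_ | sNt]; first by have := ltn_ord b; lia.
    by have := inside s; have := ltn_ord b; lia.
rewrite ltnNge => /negP []; apply/bigmax_leqP => b ib.
by have := none b; rewrite ib /= => /negbT; rewrite -ltnNge.
Qed.

Lemma chain_interval_minor k pa pb : 0 < k -> chain k pa pb ->
  interval_minor (Dmat k) M.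
Proof.
move=> k_gt0 [pe pi].
have pM s : s < k -> pa s < m /\ pb s < n.
  by move=> /pe /entryP [i [j [<- <- _]]]; split; apply: ltn_ord.
have [r [r0 rk rP]] := separating_cuts k_gt0
  (fun s sk => proj1 (pi s sk)) (fun s sk => proj1 (pM s sk)).
have [c [c0 cl cP]] := separating_cuts k_gt0
  (fun s sk => proj2 (pi s sk)) (fun s sk => proj2 (pM s sk)).
exists r, c; split; first by split=> // i /rP; lia.
split; first by split=> // j /cP; lia.
move=> i j; rewrite mxE => /eqP <-.
have [a [b [ea eb ab]]] := entryP (pe i (ltn_ord i)).
by exists a, b; rewrite ea eb; split; [exact: rP | exact: cP |].
Qed.

End LongestChain.

Section Levels.

Variables (m n : nat) (M : 'M[bool]_(m, n)).

(* The walk for level [t] is the staircase of this profile: [level_profile t i]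
   is the rightmost column (1-based) of a level-[t] entry in rows [>= i]
   (1-based), at least 1, and forced to [n] in the top row so that the walk
   ends at [(1, n)]. *)
Definition level_profile (t i : nat) : nat :=
  if i <= 1 then n else
  maxn 1 (\max_(a < m | i <= a.+1)
            \max_(b < n | M a b && (maxchain M a b == t)) b.+1).

Lemma level_profile_le t i : 0 < n -> level_profile t i <= n.
Proof.
move=> n_gt0; rewrite /level_profile; case: ifP => // _.
by rewrite geq_max n_gt0; apply/bigmax_leqP => a _; apply/bigmax_leqP => b _.
Qed.

Lemma level_profile_noninc t : 0 < n ->
  forall i, level_profile t i.+1 <= level_profile t i.
Proof.
move=> n_gt0 i; case: (leqP i 1) => [i_le1 | i_gt1].
  by rewrite {2}/level_profile i_le1 level_profile_le.
have [iS_le1F i_le1F] : (i.+1 <= 1) = false /\ (i <= 1) = false by lia.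
rewrite /level_profile iS_le1F i_le1F.
rewrite geq_max leq_maxl /=; apply: leq_trans (leq_maxr 1 _).
apply/bigmax_leqP => a ia; exact: (leq_bigmax_cond a (ltnW ia)).
Qed.

Lemma level_profile_bottom t : 0 < m -> level_profile t m.+1 = 1.
Proof.
move=> m_gt0; rewrite /level_profile ifN -?ltnNge // big_pred0 // => a.
by rewrite ltnS leqNgt ltn_ord.
Qed.

Lemma level_profile_cover (a : 'I_m) (b : 'I_n) : M a b ->
  level_profile (maxchain M a b) a.+2 <= b.+1 <=
  level_profile (maxchain M a b) a.+1.
Proof.
move=> ab; have ab' : entry M a b by rewrite entryE.
apply/andP; split.
  rewrite /level_profile /= geq_max /=.
  apply/bigmax_leqP => a' aa'; apply/bigmax_leqP => b' /andP [a'b' /eqP tt'].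
  rewrite ltnS leqNgt; apply/negP => bb'.
  by have := maxchain_lt ab' aa' bb'; rewrite tt' ltnn.
rewrite /level_profile; case: ifP => _; first exact: ltn_ord.
apply: leq_trans (leq_maxr _ _); apply: (bigmax_sup a) => //.
by apply: (bigmax_sup b) => //; rewrite ab eqxx.
Qed.

End Levels.

Lemma avoids_maxchain_lt k m n (M : 'M[bool]_(m, n)) (a : 'I_m) (b : 'I_n) :
  0 < k -> avoids (Dmat k) M -> M a b -> maxchain M a b < k.-1.
Proof.
move=> k_gt0 avoidsM ab; rewrite ltnNge; apply/negP => long.
have /maxchain_chain [pa [pb [ch _]]] : k <= maxchain M m n.
  have ab' : entry M a b by rewrite entryE.
  apply: leq_trans (maxchain_mono M (ltn_ord a) (ltn_ord b)).
  by apply: leq_trans _ (maxchain_entry ab'); rewrite -(prednK k_gt0) ltnS.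
exact: avoidsM (chain_interval_minor k_gt0 ch).
Qed.

Lemma avoids_walk_cover k m n (M : 'M[bool]_(m, n)) :
  0 < k -> 0 < m -> 0 < n -> avoids (Dmat k) M ->
  exists W : 'I_k.-1 -> seq (nat * nat),
    (forall t, increasing_walk (m, 1) (1, n) (W t)) /\
    (forall e, supp M e -> exists t, walk_set (m, 1) (W t) e).
Proof.
move=> k_gt0 m_gt0 n_gt0 avoidsM.
pose W t := behead (staircase (level_profile M t) m).
have walk t : staircase (level_profile M t) m = (m, 1) :: W t /\
    increasing_walk (m, 1) (1, n) (W t).
  by have := staircase_walk (level_profile_noninc M t n_gt0) m_gt0;
    rewrite level_profile_bottom.
exists (fun t : 'I_k.-1 => W t).
split=> [t | _ [a [b [-> ab]]]]; first by case: (walk t).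
exists (Ordinal (avoids_maxchain_lt k_gt0 avoidsM ab)).
rewrite /walk_set -(proj1 (walk _)).
rewrite (mem_staircase (level_profile_noninc M _ n_gt0)) /=.
by rewrite ltn_ord level_profile_cover.
Qed.

Theorem proposition2p3 (k m n : nat) (M : 'M[bool]_(m, n)) :
  1 <= k -> 0 < m -> 0 < n ->
  (avoids (Dmat k) M <->
   exists W : 'I_k.-1 -> seq (nat * nat),
     (forall t, increasing_walk (m, 1) (1, n) (W t)) /\
     (forall e, supp M e -> exists t, walk_set (m, 1) (W t) e)).
Proof.
move=> k_gt0 m_gt0 n_gt0; split; first exact: avoids_walk_cover.
by case=> W [walks cover]; apply: walk_cover_avoids walks cover.
Qed.
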